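(* A skew lattice $(S,\wedge,\vee)$ is a strong distributive solution of the Yang–Baxter equation if and only if it satisfies the identities \[ x\wedge y\wedge((x\vee y)\wedge z)=x\wedge y\wedge z, \] \[ (x\wedge y)\vee((x\vee y)\wedge z)=(x\vee(y\wedge z))\wedge(y\vee z), \] \[ x\vee y\vee z=x\vee(y\wedge z)\vee y\vee z \] for all $x,y,z\in S$. In particular, the class of skew lattices that are strong distributive solutions is a variety.
   Context: A skew lattice is a set $S$ with two binary operations $\wedge,\vee$, each idempotent and associative, satisfying the absorption laws $x\wedge(x\vee y)=x=x\vee(x\wedge y)$ and $(x\wedge y)\vee y=y=(x\vee y)\wedge y$ for all $x,y\in S$. A map $r:X\times X\to X\times X$ is a set-theoretic solution of the Yang–Baxter equation if $(r\times\mathrm{id})\circ(\mathrm{id}\times r)\circ(r\times\mathrm{id})=(\mathrm{id}\times r)\circ(r\times\mathrm{id})\circ(\mathrm{id}\times r)$. A skew lattice $S$ is a strong distributive solution if the map $r:S\times S\to S\times S$, $r(x,y)=(x\wedge y,x\vee y)$, is a set-theoretic solution of the Yang–Baxter equation. *)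

Definition is_skew_lattice {S : Type} (meet join : S -> S -> S) : Prop :=
  (forall x, meet x x = x) /\ (forall x, join x x = x) /\
  (forall x y z, meet x (meet y z) = meet (meet x y) z) /\
  (forall x y z, join x (join y z) = join (join x y) z) /\
  (forall x y, meet x (join x y) = x) /\
  (forall x y, join x (meet x y) = x) /\
  (forall x y, join (meet x y) y = y) /\
  (forall x y, meet (join x y) y = y).

Definition r12 {X : Type} (r : X * X -> X * X) (t : X * X * X) : X * X * X :=
  let '(a, b, c) := t in let '(a', b') := r (a, b) in (a', b', c).
Definition r23 {X : Type} (r : X * X -> X * X) (t : X * X * X) : X * X * X :=
  let '(a, b, c) := t in let '(b', c') := r (b, c) in (a, b', c').

Definition is_YBE_solution {X : Type} (r : X * X -> X * X) : Prop :=
  forall t : X * X * X, r12 r (r23 r (r12 r t)) = r23 r (r12 r (r23 r t)).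

Definition skew_r {S : Type} (meet join : S -> S -> S) (p : S * S) : S * S :=
  (meet (fst p) (snd p), join (fst p) (snd p)).

Definition strong_distributive_solution {S : Type} (meet join : S -> S -> S)
  : Prop := is_YBE_solution (skew_r meet join).


(** For r(x,y) = (x /\ y, x \/ y), both sides of the braid relation
    r12 r23 r12 = r23 r12 r23 can be evaluated at a triple (x,y,z) in
    closed form: the left side gives
      (x/\y /\ ((x\/y) /\ z), (x/\y) \/ ((x\/y) /\ z), (x\/y) \/ z)
    and the right side gives
      (x /\ (y/\z), (x \/ (y/\z)) /\ (y\/z), (x \/ (y/\z)) \/ (y\/z)).
    The Yang--Baxter equation is therefore equivalent to the three
    coordinatewise identities. *)

Lemma triple_eq_iff {X : Type} (a b c a' b' c' : X) :
  (a, b, c) = (a', b', c') <-> a = a' /\ b = b' /\ c = c'.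
Proof.
  split.
  - intros H; injection H as Ha Hb Hc; auto.
  - intros [-> [-> ->]]; reflexivity.
Qed.

Section BraidComposites.

Variables (S : Type) (meet join : S -> S -> S).

Let r : S * S -> S * S := skew_r meet join.

Definition ybe_identities (x y z : S) : Prop :=
  meet (meet x y) (meet (join x y) z) = meet (meet x y) z /\
  join (meet x y) (meet (join x y) z) = meet (join x (meet y z)) (join y z) /\
  join (join x y) z = join (join (join x (meet y z)) y) z.

Lemma braid_left (x y z : S) :
  r12 r (r23 r (r12 r (x, y, z))) =
  (meet (meet x y) (meet (join x y) z),
   join (meet x y) (meet (join x y) z),
   join (join x y) z).
Proof. reflexivity. Qed.

Hypothesis meetA : forall x y z, meet x (meet y z) = meet (meet x y) z.
Hypothesis joinA : forall x y z, join x (join y z) = join (join x y) z.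

Lemma braid_right (x y z : S) :
  r23 r (r12 r (r23 r (x, y, z))) =
  (meet (meet x y) z,
   meet (join x (meet y z)) (join y z),
   join (join (join x (meet y z)) y) z).
Proof.
  unfold r, r12, r23, skew_r; simpl.
  rewrite meetA, !joinA; reflexivity.
Qed.

Lemma braid_at_iff (x y z : S) :
  r12 r (r23 r (r12 r (x, y, z))) = r23 r (r12 r (r23 r (x, y, z))) <->
  ybe_identities x y z.
Proof. rewrite braid_left, braid_right; apply triple_eq_iff. Qed.

Lemma strong_distributive_iff_identities :
  strong_distributive_solution meet join <->
  (forall x y z : S, ybe_identities x y z).
Proof.
  split.
  - intros Hybe x y z; apply braid_at_iff, (Hybe (x, y, z)).
  - intros Hid [[x y] z]; apply braid_at_iff, Hid.
Qed.

End BraidComposites.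

Theorem mainTheorem4 (S : Type) (meet join : S -> S -> S)
  (HS : is_skew_lattice meet join) :
  strong_distributive_solution meet join <->
  (forall x y z : S,
     meet (meet x y) (meet (join x y) z) = meet (meet x y) z /\
     join (meet x y) (meet (join x y) z) = meet (join x (meet y z)) (join y z) /\
     join (join x y) z = join (join (join x (meet y z)) y) z).
Proof.
  destruct HS as [_ [_ [meetA [joinA _]]]].
  exact (strong_distributive_iff_identities S meet join meetA joinA).
Qed.
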